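(* Let $0<\mu\le L$, $f\in\mathcal S^2_{\mu,L}(\mathbb R^n)$ with minimizer $x^*$, $\beta\in[0,1]$, $x_0\in\mathbb R^n$, and step size $0<s\le 1/L$. Let $X$ be the solution of the $\beta$-High Resolution ODE $$\ddot X+2\sqrt\mu\,\dot X+\beta\sqrt s\,\nabla^2 f(X)\dot X+(1+\sqrt{\mu s})\nabla f(X)=0,\quad X(0)=x_0,\ \dot X(0)=-\frac{2\sqrt s\,\nabla f(x_0)}{1+\sqrt{\mu s}}.$$ Then for all $t\ge0$, $$f(X(t))-f(x^* )\le\frac{3+(2-\beta)^2}{2s}\|x_0-x^*\|^2 e^{-\frac{\sqrt\mu}{4}t}.$$
   Context: $\mathcal S^2_{\mu,L}(\mathbb R^n)$ is the class of twice differentiable, $\mu$-strongly convex functions $f:\mathbb R^n\to\mathbb R$ (i.e. $f(y)\ge f(x)+\langle\nabla f(x),y-x\rangle+\frac\mu2\|y-x\|^2$) whose gradient is $L$-Lipschitz and whose Hessian is Lipschitz in Frobenius norm ($\|\nabla^2f(x)-\nabla^2f(y)\|_F\le L'\|x-y\|$ for some $L'>0$). *)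

From HB Require Import structures.
From mathcomp Require Import all_boot all_order all_algebra.
From mathcomp Require Import all_classical all_reals all_analysis.
Set Implicit Arguments. Unset Strict Implicit. Unset Printing Implicit Defensive.
Import Order.TTheory GRing.Theory Num.Theory.
Import numFieldNormedType.Exports.
Local Open Scope classical_set_scope.
Local Open Scope ring_scope.

Definition dotv {R : realType} {n : nat} (u v : 'rV[R]_n) : R :=
  \sum_(i < n) u 0 i * v 0 i.
Definition enorm {R : realType} {n : nat} (v : 'rV[R]_n) : R :=
  Num.sqrt (dotv v v).
Definition frob {R : realType} {n : nat} (A : 'M[R]_n) : R :=
  Num.sqrt (\sum_(i < n) \sum_(j < n) A i j ^+ 2).

Definition is_gradient {R : realType} {n : nat}
    (f : 'rV[R]_n -> R) (gradf : 'rV[R]_n -> 'rV[R]_n) : Prop :=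
  forall x, differentiable f x /\ forall v, 'd f x v = dotv (gradf x) v.

(* hessf is the Hessian of f (given its gradient gradf): gradf is
   differentiable at every x with differential v |-> hessf x * v
   (written for row vectors as v *m (hessf x)^T). *)
Definition is_hessian {R : realType} {n : nat}
    (gradf : 'rV[R]_n -> 'rV[R]_n) (hessf : 'rV[R]_n -> 'M[R]_n) : Prop :=
  forall x, differentiable gradf x /\
    forall v, 'd gradf x v = v *m (hessf x)^T.

Definition S2 {R : realType} {n : nat} (mu L : R) (f : 'rV[R]_n -> R)
    (gradf : 'rV[R]_n -> 'rV[R]_n) (hessf : 'rV[R]_n -> 'M[R]_n) : Prop :=
  [/\ is_gradient f gradf,
      is_hessian gradf hessf,
      (forall x y, f y >= f x + dotv (gradf x) (y - x) + mu / 2 * enorm (y - x) ^+ 2),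
      (forall x y, enorm (gradf x - gradf y) <= L * enorm (x - y)) &
      (exists L' : R, 0 < L' /\
         forall x y, frob (hessf x - hessf y) <= L' * enorm (x - y))].

Definition HR_solution {R : realType} {n : nat} (mu s beta : R)
    (gradf : 'rV[R]_n -> 'rV[R]_n) (hessf : 'rV[R]_n -> 'M[R]_n)
    (x0 : 'rV[R]_n) (X V : R -> 'rV[R]_n) : Prop :=
  [/\ X 0 = x0,
      V 0 = - ((2 * Num.sqrt s) / (1 + Num.sqrt (mu * s))) *: gradf x0,
      {within `[0, +oo[, continuous X},
      {within `[0, +oo[, continuous V} &
      (forall t : R, 0 < t ->
         [/\ is_derive t 1 X (V t),
             derivable V t 1 &
             'D_1 V t + (2 * Num.sqrt mu) *: V t
               + (beta * Num.sqrt s) *: (V t *m (hessf (X t))^T)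
               + (1 + Num.sqrt (mu * s)) *: gradf (X t) = 0])].

From HB Require Import structures.
From mathcomp Require Import all_boot all_order all_algebra.
From mathcomp Require Import all_classical all_reals all_analysis.
From mathcomp Require Import ring lra.
Import Order.TTheory GRing.Theory Num.Theory.
Import numFieldNormedType.Exports.
Local Open Scope classical_set_scope.
Local Open Scope ring_scope.

(* Along the flow, the Lyapunov function
     E = (1 + sqrt(mu s)) (f(X) - f(xstar)) + |V|^2 / 4
         + |V + 2 sqrt(mu) (X - xstar) + beta sqrt(s) grad f(X)|^2 / 4
   satisfies E' <= - (sqrt(mu) / 4) E: substituting the ODE into E' leaves only
   dissipative terms, which dominate E thanks to strong convexity
   (<X - xstar, grad f(X)> >= f(X) - f(xstar) + mu/2 |X - xstar|^2), the positivity
   of the Hessian and |a + b|^2 <= 2|a|^2 + 2|b|^2.  Hence E(t) <= E(0) e^(-sqrt(mu) t / 4).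
   Finally E(t) >= (1 + sqrt(mu s)) (f(X(t)) - f(xstar)), and L-smoothness with
   s <= 1/L gives E(0) <= (1 + sqrt(mu s)) (3 + (2 - beta)^2) / (2 s) |x0 - xstar|^2. *)

Set Implicit Arguments.
Unset Strict Implicit.
Unset Printing Implicit Defensive.

Section InnerProduct.
Context {R : realType} {n : nat}.
Implicit Types (u v w : 'rV[R]_n) (k : R).

Lemma dotvC u v : dotv u v = dotv v u.
Proof. by apply: eq_bigr => i _; rewrite mulrC. Qed.

Lemma dotvDl u v w : dotv (u + v) w = dotv u w + dotv v w.
Proof. by rewrite /dotv -big_split; apply: eq_bigr => i _; rewrite !mxE mulrDl. Qed.

Lemma dotvDr u v w : dotv w (u + v) = dotv w u + dotv w v.
Proof. by rewrite dotvC dotvDl !(dotvC w). Qed.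

Lemma dotvZl k u w : dotv (k *: u) w = k * dotv u w.
Proof. by rewrite /dotv mulr_sumr; apply: eq_bigr => i _; rewrite !mxE mulrA. Qed.

Lemma dotvZr k u w : dotv w (k *: u) = k * dotv w u.
Proof. by rewrite dotvC dotvZl dotvC. Qed.

Lemma dotvNl u w : dotv (- u) w = - dotv u w.
Proof. by rewrite -scaleN1r dotvZl mulN1r. Qed.

Lemma dotvNr u w : dotv w (- u) = - dotv w u.
Proof. by rewrite dotvC dotvNl dotvC. Qed.

Lemma dotvBl u v w : dotv (u - v) w = dotv u w - dotv v w.
Proof. by rewrite dotvDl dotvNl. Qed.

Lemma dotvBr u v w : dotv w (u - v) = dotv w u - dotv w v.
Proof. by rewrite dotvDr dotvNr. Qed.

Lemma dotv0l w : dotv 0 w = 0.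
Proof. by rewrite /dotv big1 // => i _; rewrite mxE mul0r. Qed.

Lemma dotv0r w : dotv w 0 = 0.
Proof. by rewrite dotvC dotv0l. Qed.

Definition dotvE := (dotvDl, dotvDr, dotvBl, dotvBr, dotvNl, dotvNr, dotvZl, dotvZr).

Lemma dotvvZ k u : dotv (k *: u) (k *: u) = k ^+ 2 * dotv u u.
Proof. by rewrite dotvZl dotvZr mulrA. Qed.

Lemma dotvv_combination k l u v : dotv (k *: u + l *: v) (k *: u + l *: v)
  = k ^+ 2 * dotv u u + 2 * k * l * dotv u v + l ^+ 2 * dotv v v.
Proof. by rewrite !(dotvDl, dotvDr, dotvZl, dotvZr) (dotvC v u); ring. Qed.

Lemma dotvv_ge0 u : 0 <= dotv u u.
Proof. by apply: sumr_ge0 => i _; rewrite -expr2 sqr_ge0. Qed.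

Lemma dotvv_eq0 u : (dotv u u == 0) = (u == 0).
Proof.
apply/idP/eqP => [|->]; last by rewrite dotv0l.
rewrite psumr_eq0 => [/allP u0|i _]; last by rewrite -expr2 sqr_ge0.
apply/rowP => i; rewrite mxE.
by have := u0 i (mem_index_enum _); rewrite /= -expr2 sqrf_eq0 => /eqP.
Qed.

Lemma enorm_sqr u : enorm u ^+ 2 = dotv u u.
Proof. by rewrite sqr_sqrtr // dotvv_ge0. Qed.

Lemma enormN u : enorm (- u) = enorm u.
Proof. by rewrite /enorm dotvNl dotvNr opprK. Qed.

Lemma enorm_le_dotv u v k : enorm u <= k * enorm v -> dotv u u <= k ^+ 2 * dotv v v.
Proof.
move=> le_uv; rewrite -!enorm_sqr -exprMn.
by rewrite ler_sqr ?nnegrE ?sqrtr_ge0 // (le_trans _ le_uv) ?sqrtr_ge0.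
Qed.

Lemma dotv_young u v k : 0 < k -> 2 * dotv u v <= k * dotv u u + k^-1 * dotv v v.
Proof.
move=> k0; have := dotvv_ge0 (k *: u - v).
rewrite !dotvE (dotvC v u) => sq_ge0.
rewrite -subr_ge0.
have -> : k * dotv u u + k^-1 * dotv v v - 2 * dotv u v
    = k^-1 * (k * (k * dotv u u - dotv u v) - (k * dotv u v - dotv v v)).
  by field; rewrite gt_eqF.
by rewrite mulr_ge0 // invr_ge0 ltW.
Qed.

Lemma dotvv_addr_le u v : dotv (u + v) (u + v) <= 2 * dotv u u + 2 * dotv v v.
Proof.
have : 0 <= dotv (u - v) (u - v) := dotvv_ge0 _.
rewrite !dotvE (dotvC v u); lra.
Qed.

End InnerProduct.

Section CurveCalculus.
Context {R : realType} {n : nat}.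

Lemma is_derive_diff_comp {W : normedModType R} (F : 'rV[R]_n -> W)
    (g : R -> 'rV[R]_n) (t : R) (dg : 'rV[R]_n) :
  differentiable F (g t) -> is_derive t 1 g dg ->
  is_derive t 1 (F \o g) ('d F (g t) dg).
Proof.
move=> dF g_dg.
have diff_g : differentiable g t by apply/derivable1_diffP.
apply: DeriveDef; first exact/diff_derivable/differentiable_comp.
rewrite deriveE; last exact: differentiable_comp.
have <- : 'D_1 g t = dg := @derive_val _ _ _ _ _ _ _ g_dg.
by rewrite diff_comp //= deriveE.
Qed.

Lemma is_derive_line (x d : 'rV[R]_n) (t : R) :
  is_derive t 1 (fun s : R => x + s *: d) d.
Proof.
have scale_d : is_diff t ( *:%R ^~ d) ( *:%R ^~ d) := is_diff_scalel t d.
have : is_derive t 1 ( *:%R ^~ d) d.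
  apply: DeriveDef; first exact: diff_derivable.
  by rewrite deriveE // diff_val scale1r.
by move=> ?; apply: is_derive_eq; rewrite add0r.
Qed.

Lemma is_derive_coord (u : R -> 'rV[R]_n) (t : R) (du : 'rV[R]_n) (i : 'I_n) :
  is_derive t 1 u du -> is_derive t 1 (fun s => u s 0 i) (du 0 i).
Proof.
move=> u_du; apply: DeriveDef; first exact: (derivable_mxP _ _ _).1.
by rewrite -(@derive_val _ _ _ _ _ _ _ u_du) derive_mx // mxE.
Qed.

Lemma is_derive_dotv (u v : R -> 'rV[R]_n) (t : R) (du dv : 'rV[R]_n) :
  is_derive t 1 u du -> is_derive t 1 v dv ->
  is_derive t 1 (fun s => dotv (u s) (v s)) (dotv du (v t) + dotv (u t) dv).
Proof.
move=> u_du v_dv.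
have -> : (fun s => dotv (u s) (v s)) = \sum_(i < n) (fun s => u s 0 i * v s 0 i).
  by apply/funext => s; rewrite fct_sumE.
apply: is_derive_eq.
  apply: is_derive_sum => i.
  have := is_derive_coord i u_du; have := is_derive_coord i v_dv.
  by move=> ? ?; apply: is_deriveM.
rewrite /dotv -big_split; apply: eq_bigr => i _ /=.
by rewrite addrC [_ *: du 0 i]mulrC.
Qed.

Lemma cvg_dotv {T : Type} (F : set_system T) {FF : Filter F}
    (u v : T -> 'rV[R]_n) (a b : 'rV[R]_n) :
  u @ F --> a -> v @ F --> b -> (fun s => dotv (u s) (v s)) @ F --> dotv a b.
Proof.
move=> u_a v_b; apply: cvg_big => // [|i _]; first exact: add_continuous.
apply: cvgM; first exact: (continuous_cvg _ (@coord_continuous R 1 n 0 i a) u_a).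
exact: (continuous_cvg _ (@coord_continuous R 1 n 0 i b) v_b).
Qed.

End CurveCalculus.

Lemma le_expR_decay {R : realType} (E dE : R -> R) (k : R) :
  {within `[0, +oo[, continuous E} ->
  (forall t : R, 0 < t -> is_derive t 1 E (dE t)) ->
  (forall t : R, 0 < t -> dE t <= - k * E t) ->
  forall t : R, 0 <= t -> E t <= E 0 * expR (- k * t).
Proof.
move=> E_cont E_dE dE_le t t_ge0.
pose F u := E u * expR (k * u).
have F_deriv (u : R) : 0 < u -> is_derive u 1 F (expR (k * u) * (dE u + k * E u)).
  move=> u_gt0; have := E_dE u u_gt0 => E_dEu.
  have exp_deriv : is_derive u 1 (fun u => expR (k * u)) (expR (k * u) * k).
    by apply: is_derive_eq; rewrite /GRing.scale /= mulr1.
  by rewrite /F; apply: is_derive_eq; rewrite /GRing.scale /=; ring.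
have F_cont : {within `[0, +oo[, continuous F}.
  apply/subspace_continuousP => x x_ge0; apply: cvgM.
    exact: (subspace_continuousP _ _).1 E_cont x x_ge0.
  apply: continuous_cvg; first exact: continuous_expR.
  by apply: cvgM; [exact: cvg_cst | exact: cvg_within].
have F_nincr : F t <= F 0.
  apply: (ler0_derive1_nincry _ _ F_cont) => // u; rewrite in_itv /= andbT => u_gt0.
    exact: (@ex_derive _ _ _ _ _ _ _ (F_deriv u u_gt0)).
  rewrite derive1E (@derive_val _ _ _ _ _ _ _ (F_deriv u u_gt0)) pmulr_rle0 ?expR_gt0 //.
  by have := dE_le u u_gt0; lra.
have := ler_wpM2r (ltW (expR_gt0 (- k * t))) F_nincr.
by rewrite /F mulr0 expR0 mulr1 -mulrA -expRD mulNr subrr expR0 mulr1.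
Qed.

Section SmoothConvexity.
Context {R : realType} {n : nat}.
Variables (f : 'rV[R]_n -> R) (gradf : 'rV[R]_n -> 'rV[R]_n).
Implicit Types x y d v : 'rV[R]_n.

Lemma is_derive_line_comp_gradient x d (t : R) : is_gradient f gradf ->
  is_derive t 1 (fun s => f (x + s *: d)) (dotv (gradf (x + t *: d)) d).
Proof.
move=> f_grad; rewrite -(f_grad _).2.
exact: (is_derive_diff_comp (f_grad _).1 (is_derive_line x d t)).
Qed.

Lemma is_derive_line_comp_hessian hessf x d (t : R) : is_hessian gradf hessf ->
  is_derive t 1 (fun s => gradf (x + s *: d)) (d *m (hessf (x + t *: d))^T).
Proof.
move=> grad_hess; rewrite -(grad_hess _).2.
exact: (is_derive_diff_comp (grad_hess _).1 (is_derive_line x d t)).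
Qed.

Section LipschitzGradient.
Variable L : R.
Hypotheses (f_grad : is_gradient f gradf) (L_gt0 : 0 < L).
Hypothesis gradf_lip : forall x y, enorm (gradf x - gradf y) <= L * enorm (x - y).

Lemma descent_le x d : f (x + d) <= f x + dotv (gradf x) d + L / 2 * dotv d d.
Proof.
set A := dotv (gradf x) d; set B := dotv d d.
pose psi (s : R) := f (x + s *: d) - (s * A + L / 2 * B * (s * s)).
have psi_deriv (s : R) : is_derive s 1 psi (dotv (gradf (x + s *: d)) d - (A + L * B * s)).
  have := is_derive_line_comp_gradient x d s f_grad => f_line.
  by rewrite /psi; apply: is_derive_eq; rewrite /GRing.scale /=; field.
have psi'_le0 (s : R) : 0 < s -> dotv (gradf (x + s *: d)) d - (A + L * B * s) <= 0.
  (* Young's inequality with weight (L s)^-1 against the Lipschitz bound on u. *)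
  move=> s_gt0; set u := gradf (x + s *: d) - gradf x.
  have u_le : dotv u u <= L ^+ 2 * (s ^+ 2 * B).
    have := enorm_le_dotv (gradf_lip (x + s *: d) x).
    by rewrite addrAC subrr add0r dotvZl dotvZr [s * (s * _)]mulrA -expr2.
  have Ls_gt0 : 0 < L * s by rewrite mulr_gt0.
  have := dotv_young u d (_ : 0 < (L * s)^-1); rewrite invr_gt0 invrK -/B => /(_ Ls_gt0).
  have : (L * s)^-1 * dotv u u <= L * s * B.
    have -> : L * s * B = (L * s)^-1 * (L ^+ 2 * (s ^+ 2 * B)).
      by field; rewrite !gt_eqF.
    by rewrite ler_wpM2l // invr_ge0 ltW.
  have : dotv u d = dotv (gradf (x + s *: d)) d - A by rewrite dotvBl.
  lra.
have psi_nincr : psi 1 <= psi 0.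
  have psi_der (s : R) : derivable psi s 1 := @ex_derive _ _ _ _ _ _ _ (psi_deriv s).
  apply: (@ler0_derive1_le_cc R psi 0 1 (fun s _ => psi_der s));
    rewrite ?in_itv /= ?ler01 ?lexx //.
    move=> s; rewrite in_itv /= => /andP[s_gt0 _].
    by rewrite derive1E (@derive_val _ _ _ _ _ _ _ (psi_deriv s)) psi'_le0.
  exact: derivable_within_continuous (fun s _ => psi_der s).
move: psi_nincr; rewrite /psi scale0r scale1r addr0; lra.
Qed.

Lemma gradient_eq0_at_min xs : (forall y, f xs <= f y) -> gradf xs = 0.
Proof.
move=> xs_min; set g := gradf xs; apply/eqP; rewrite -dotvv_eq0 eq_le dotvv_ge0 andbT.
have := descent_le xs (- (L^-1 *: g)); have := xs_min (xs - L^-1 *: g).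
rewrite !dotvE /= -/g; set gg := dotv g g => le_min le_descent.
have : (2 * L)^-1 * gg <= 0.
  have -> : (2 * L)^-1 * gg = L^-1 * gg - L / 2 * (L^-1 * (L^-1 * gg)).
    by field; rewrite gt_eqF.
  lra.
by rewrite pmulr_rle0 // invr_gt0 mulr_gt0.
Qed.

End LipschitzGradient.

Lemma strongly_convex_gradient_monotone (mu : R) x y : 0 <= mu ->
  (forall x y, f y >= f x + dotv (gradf x) (y - x) + mu / 2 * enorm (y - x) ^+ 2) ->
  0 <= dotv (gradf y - gradf x) (y - x).
Proof.
move=> mu_ge0 f_strong; have := f_strong x y; have := f_strong y x.
rewrite -opprB dotvNr enormN dotvBl.
have : 0 <= mu / 2 * enorm (y - x) ^+ 2 by rewrite mulr_ge0 ?divr_ge0 ?sqr_ge0.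
lra.
Qed.

Lemma monotone_hessian_psd hessf x v :
  (forall x y, 0 <= dotv (gradf y - gradf x) (y - x)) -> is_hessian gradf hessf ->
  0 <= dotv v (v *m (hessf x)^T).
Proof.
move=> gradf_mono grad_hess.
rewrite dotvC; apply/ler_addgt0Pl => e e_gt0.
(* The perturbation [e * s] makes [h] strictly increasing, as [incr_derive1_ge0_itv] requires. *)
pose h (s : R) := dotv (gradf (x + s *: v)) v + e * s.
have h_deriv (s : R) : is_derive s 1 h (dotv (v *m (hessf (x + s *: v))^T) v + e).
  have := is_derive_line_comp_hessian x v s grad_hess.
  move=> /is_derive_dotv /(_ (is_derive_cst v s 1)) gv_deriv.
  by rewrite /h; apply: is_derive_eq; rewrite dotv0r addr0 /GRing.scale /= mulr1.
have h_incr : {in `[-1, 1] &, {homo h : a b / a < b}}.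
  move=> a b _ _ ab; rewrite /h.
  have := gradf_mono (x + a *: v) (x + b *: v).
  rewrite opprD addrACA subrr add0r -scalerBl dotvZr pmulr_rge0 ?subr_gt0 // dotvBl.
  have : 0 < e * (b - a) by rewrite mulr_gt0 // subr_gt0.
  lra.
have h_der (s : R) : derivable h s 1 := @ex_derive _ _ _ _ _ _ _ (h_deriv s).
have := @incr_derive1_ge0_itv R h true false (-1) 1 0 (fun s _ => h_der s) h_incr.
rewrite derive1E (@derive_val _ _ _ _ _ _ _ (h_deriv 0)) scale0r addr0 addrC.
by apply; rewrite in_itv /= ltr01 andbT ltrN10.
Qed.

End SmoothConvexity.

Section ScalarBounds.
Context {R : realFieldType}.

Lemma cubic_margin (r : R) : 0 <= r <= 1 -> 1 + r ^+ 2 * (1 + r) ^+ 2 <= (1 + r) ^+ 3.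
Proof.
case/andP=> r_ge0 r_le1.
have r2_le1 : r ^+ 2 <= 1 by rewrite expr_le1.
have r3_le1 : r ^+ 3 <= 1 by rewrite expr_le1.
rewrite -subr_ge0 (_ : _ - _ = r * (3 + 2 * r - r ^+ 2 - r ^+ 3)); last by ring.
by rewrite mulr_ge0 //; lra.
Qed.

Lemma initial_constant_le (r beta : R) : 0 <= r <= 1 -> 0 <= beta <= 1 ->
  (1 + r) / 2 + ((2 / (1 + r)) ^+ 2 + (beta - 2 / (1 + r)) ^+ 2) / 4 + r ^+ 2
    <= (1 + r) * (3 + (2 - beta) ^+ 2) / 2.
Proof.
move=> /andP[r_ge0 r_le1] /andP[beta_ge0 beta_le1].
have c_gt0 : 0 < 1 + r by lra.
have z_ge1 : 1 <= 2 / (1 + r) by rewrite ler_pdivlMr // mul1r; lra.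
have z_le2 : 2 / (1 + r) <= 2 by rewrite ler_pdivrMr //; lra.
have shift_le : (beta - 2 / (1 + r)) ^+ 2 <= (2 - beta) ^+ 2.
  by rewrite -sqrrN opprB ler_sqr ?nnegrE; lra.
have z2_le : (2 / (1 + r)) ^+ 2 / 4 + r ^+ 2 <= 1 + r.
  rewrite -(ler_pM2r (exprn_gt0 2 c_gt0)).
  have -> : ((2 / (1 + r)) ^+ 2 / 4 + r ^+ 2) * (1 + r) ^+ 2 = 1 + r ^+ 2 * (1 + r) ^+ 2.
    by field; rewrite gt_eqF.
  by rewrite -exprS cubic_margin // r_ge0.
have := sqr_ge0 (2 - beta); have : 0 <= r * (2 - beta) ^+ 2 by rewrite mulr_ge0 ?sqr_ge0.
lra.
Qed.

(* [vv, vHv, gg, ee, eg, ww] stand for |V|^2, <V, Hess f(X) V>, |grad f(X)|^2,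
   |X - xstar|^2, <X - xstar, grad f(X)> and the squared shifted velocity;
   [b = beta sqrt(s)] and [c = 1 + sqrt(mu s)]. *)
Lemma lyapunov_rate_bound (m b c P vv vHv eg gg ee ww : R) :
  0 < m -> 0 <= b -> 1 <= c -> m * b <= 1 ->
  0 <= P -> 0 <= vv -> 0 <= vHv -> 0 <= gg -> 0 <= ee ->
  P + m ^+ 2 / 2 * ee <= eg ->
  ww <= 4 * vv + 4 * b ^+ 2 * gg + 8 * m ^+ 2 * ee ->
  - m * vv - b / 2 * vHv - m * c * eg - b * c / 2 * gg
    <= - (m / 4) * (c * P + 4^-1 * vv + 4^-1 * ww).
Proof.
move=> m_gt0 b_ge0 c_ge1 mb_le1 P_ge0 vv_ge0 vHv_ge0 gg_ge0 ee_ge0 eg_ge ww_le.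
have m_ge0 := ltW m_gt0.
have mc_ge0 : 0 <= m * c by rewrite mulr_ge0 //; lra.
have c1_ge0 : 0 <= c - 1 by rewrite subr_ge0.
have gap_ge0 : 0 <= 2 * c - m * b by lra.
have := mulr_ge0 m_ge0 vv_ge0.
have := mulr_ge0 b_ge0 vHv_ge0.
have := mulr_ge0 mc_ge0 P_ge0.
have := mulr_ge0 (mulr_ge0 (exprn_ge0 3 m_ge0) c1_ge0) ee_ge0.
have := mulr_ge0 (mulr_ge0 gg_ge0 b_ge0) gap_ge0.
have : 0 <= eg - P - m ^+ 2 / 2 * ee by lra.
move=> /(mulr_ge0 mc_ge0).
have : 0 <= 4 * vv + 4 * b ^+ 2 * gg + 8 * m ^+ 2 * ee - ww by rewrite subr_ge0.
move=> /(mulr_ge0 m_ge0).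
lra.
Qed.

(* [P, G, D] stand for f(x0) - f(xstar), |grad f(x0)|^2 and |x0 - xstar|^2. *)
Lemma initial_energy_bound (m w beta P G D : R) :
  0 < m -> 0 < w -> m * w <= 1 -> 0 <= beta <= 1 ->
  0 <= G -> P <= D / (2 * w ^+ 2) -> w ^+ 4 * G <= D ->
  (1 + m * w) * P + 4^-1 * ((2 / (1 + m * w) * w) ^+ 2 * G)
    + 4^-1 * (((beta - 2 / (1 + m * w)) * w) ^+ 2 * G + 4 * m ^+ 2 * D)
  <= (1 + m * w) * ((3 + (2 - beta) ^+ 2) / (2 * w ^+ 2)) * D.
Proof.
move=> m_gt0 w_gt0 mw_le1 beta01 G_ge0 P_le G_le.
set c := 1 + m * w; set a := 2 / c.
have mw_ge0 : 0 <= m * w by rewrite mulr_ge0 // ltW.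
have w2_gt0 : 0 < w ^+ 2 by rewrite exprn_gt0.
have c_gt0 : 0 < c by rewrite /c; lra.
set Dw := D / w ^+ 2.
have {}P_le : P <= Dw / 2.
  by rewrite /Dw -mulrA -invfM [w ^+ 2 * 2]mulrC.
have wG_le : w ^+ 2 * G <= Dw.
  by rewrite ler_pdivlMr // mulrAC -exprD.
have Dw_ge0 : 0 <= Dw by apply: le_trans wG_le; rewrite mulr_ge0 // ltW.
have K_ge0 : 0 <= (a ^+ 2 + (beta - a) ^+ 2) / 4 by rewrite divr_ge0 ?addr_ge0 ?sqr_ge0.
have -> : c * P + 4^-1 * ((a * w) ^+ 2 * G) + 4^-1 * (((beta - a) * w) ^+ 2 * G + 4 * m ^+ 2 * D)
    = c * P + (a ^+ 2 + (beta - a) ^+ 2) / 4 * (w ^+ 2 * G) + (m * w) ^+ 2 * Dw.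
  by rewrite /Dw; field; rewrite gt_eqF.
have -> : c * ((3 + (2 - beta) ^+ 2) / (2 * w ^+ 2)) * D = c * (3 + (2 - beta) ^+ 2) / 2 * Dw.
  by rewrite /Dw; field; rewrite gt_eqF.
have := ler_wpM2l K_ge0 wG_le.
have := ler_wpM2l (ltW c_gt0) P_le.
have mw01 : 0 <= m * w <= 1 by rewrite mw_ge0 mw_le1.
have := ler_wpM2r Dw_ge0 (initial_constant_le mw01 beta01); rewrite -/c -/a.
lra.
Qed.

End ScalarBounds.

(* [m] and [w] stand for sqrt(mu) and sqrt(s). *)
Section HighResolutionFlow.
Context {R : realType} {n : nat}.
Variables (f : 'rV[R]_n -> R) (gradf : 'rV[R]_n -> 'rV[R]_n) (hessf : 'rV[R]_n -> 'M[R]_n).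
Variables (L m w beta : R) (xstar x0 : 'rV[R]_n) (X V : R -> 'rV[R]_n).
Hypotheses (m_gt0 : 0 < m) (w_gt0 : 0 < w) (beta_ge0 : 0 <= beta) (beta_le1 : beta <= 1).
Hypotheses (mL : m ^+ 2 <= L) (Lw : L * w ^+ 2 <= 1).
Hypotheses (f_grad : is_gradient f gradf) (grad_hess : is_hessian gradf hessf).
Hypothesis f_strong : forall x y,
  f y >= f x + dotv (gradf x) (y - x) + m ^+ 2 / 2 * enorm (y - x) ^+ 2.
Hypothesis gradf_lip : forall x y, enorm (gradf x - gradf y) <= L * enorm (x - y).
Hypothesis xstar_min : forall y, f xstar <= f y.
Hypotheses (X0 : X 0 = x0) (V0 : V 0 = - (2 * w / (1 + m * w)) *: gradf x0).
Hypotheses (X_cont : {within `[0, +oo[, continuous X}) (V_cont : {within `[0, +oo[, continuous V}).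
Hypothesis hr_ode : forall t : R, 0 < t ->
  [/\ is_derive t 1 X (V t), derivable V t 1 &
      'D_1 V t + (2 * m) *: V t + (beta * w) *: (V t *m (hessf (X t))^T)
        + (1 + m * w) *: gradf (X t) = 0].

Implicit Types t : R.

Let L_gt0 : 0 < L.
Proof. by rewrite (lt_le_trans _ mL) ?exprn_gt0. Qed.

Let mw_le1 : m * w <= 1.
Proof.
have : (m * w) ^+ 2 <= 1.
  by rewrite exprMn; apply: le_trans Lw; rewrite ler_pM2r ?exprn_gt0.
by rewrite expr_le1 // mulr_ge0 ?ltW.
Qed.

Let gradf_xstar : gradf xstar = 0.
Proof. exact (gradient_eq0_at_min f_grad L_gt0 gradf_lip xstar_min). Qed.

Let gradf_mono x y : 0 <= dotv (gradf y - gradf x) (y - x).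
Proof. exact: strongly_convex_gradient_monotone x y (sqr_ge0 m) f_strong. Qed.

Definition shifted_velocity (t : R) : 'rV[R]_n :=
  V t + (2 * m) *: (X t - xstar) + (beta * w) *: gradf (X t).

Definition lyapunov (t : R) : R :=
  (1 + m * w) * (f (X t) - f xstar) + 4^-1 * dotv (V t) (V t)
    + 4^-1 * dotv (shifted_velocity t) (shifted_velocity t).

Definition lyapunov_rate (t : R) : R :=
  - m * dotv (V t) (V t) - beta * w / 2 * dotv (V t) (V t *m (hessf (X t))^T)
    - m * (1 + m * w) * dotv (X t - xstar) (gradf (X t))
    - beta * w * (1 + m * w) / 2 * dotv (gradf (X t)) (gradf (X t)).

Lemma lyapunov_is_derive t : 0 < t -> is_derive t 1 lyapunov (lyapunov_rate t).
Proof.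
move=> t_gt0; have [X_V V_der ode] := hr_ode t_gt0.
set HV := V t *m (hessf (X t))^T in ode *.
set acc := - ((2 * m) *: V t + (beta * w) *: HV + (1 + m * w) *: gradf (X t)).
have V_acc : is_derive t 1 V acc.
  have <- : 'D_1 V t = acc by apply/eqP; rewrite -addr_eq0 !addrA ode.
  exact: derivableP.
have gradX_HV : is_derive t 1 (gradf \o X) HV.
  by rewrite /HV -(grad_hess _).2; exact: is_derive_diff_comp (grad_hess _).1 X_V.
have fX_deriv : is_derive t 1 (f \o X) (dotv (gradf (X t)) (V t)).
  by rewrite -(f_grad _).2; exact: is_derive_diff_comp (f_grad _).1 X_V.
have W_deriv : is_derive t 1 shifted_velocity (- ((1 + m * w) *: gradf (X t))).
  rewrite /shifted_velocity; apply: is_derive_eq.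
  by apply/rowP => i; rewrite !mxE; ring.
have := is_derive_dotv V_acc V_acc; have := is_derive_dotv W_deriv W_deriv => WW_deriv VV_deriv.
rewrite /lyapunov; apply: is_derive_eq.
rewrite /lyapunov_rate /shifted_velocity /acc /GRing.scale /= !dotvE.
rewrite (dotvC (gradf (X t)) (X t)) (dotvC (gradf (X t)) xstar).
rewrite (dotvC (gradf (X t)) (V t)) (dotvC HV (V t)).
by field.
Qed.

Lemma lyapunov_rate_le t : lyapunov_rate t <= - (m / 4) * lyapunov t.
Proof.
rewrite /lyapunov_rate /lyapunov.
set v := V t; set g := gradf (X t); set e := X t - xstar; set P := f (X t) - f xstar.
have P_ge0 : 0 <= P by rewrite subr_ge0.
have vHv_ge0 : 0 <= dotv v (v *m (hessf (X t))^T).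
  exact: monotone_hessian_psd gradf_mono grad_hess.
have eg_ge : P + m ^+ 2 / 2 * dotv e e <= dotv e g.
  have := f_strong (X t) xstar.
  rewrite -opprB enormN enorm_sqr dotvNr dotvC -/e -/g /P; lra.
have W_le : dotv (shifted_velocity t) (shifted_velocity t)
    <= 4 * dotv v v + 4 * (beta * w) ^+ 2 * dotv g g + 8 * m ^+ 2 * dotv e e.
  rewrite /shifted_velocity -addrA (addrC ((2 * m) *: _)) addrA.
  have := dotvv_addr_le (v + (beta * w) *: g) ((2 * m) *: e).
  have := dotvv_addr_le v ((beta * w) *: g).
  rewrite !dotvE; lra.
have bw_ge0 : 0 <= beta * w by rewrite mulr_ge0 // ltW.
have mbw_le1 : m * (beta * w) <= 1.
  by apply: le_trans mw_le1; rewrite mulrCA ler_piMl // mulr_ge0 // ltW.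
have c_ge1 : 1 <= 1 + m * w by rewrite lerDl mulr_ge0 // ltW.
exact: lyapunov_rate_bound m_gt0 bw_ge0 c_ge1 mbw_le1 P_ge0 (dotvv_ge0 _) vHv_ge0
  (dotvv_ge0 _) (dotvv_ge0 _) eg_ge W_le.
Qed.

Lemma lyapunov_continuous : {within `[0, +oo[, continuous lyapunov}.
Proof.
apply/subspace_continuousP => t t_ge0.
set F := within _ _; have F_filter : Filter F := within_filter _ (nbhs_filter t).
have X_t := (subspace_continuousP _ X).1 X_cont t t_ge0.
have V_t := (subspace_continuousP _ V).1 V_cont t t_ge0.
have fX_t := continuous_cvg _ (differentiable_continuous (f_grad (X t)).1) X_t.
have gX_t := continuous_cvg _ (differentiable_continuous (grad_hess (X t)).1) X_t.
have W_t : shifted_velocity s @[s --> F] --> shifted_velocity t.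
  apply: cvgD; first apply: cvgD; first exact: V_t.
    by apply: cvgZ; [exact: cvg_cst | apply: cvgB; [exact: X_t | exact: cvg_cst]].
  by apply: cvgZ; [exact: cvg_cst | exact: gX_t].
apply: cvgD; first apply: cvgD.
- by apply: cvgM; [exact: cvg_cst | apply: cvgB; [exact: fX_t | exact: cvg_cst]].
- by apply: cvgM; [exact: cvg_cst | exact: cvg_dotv].
- by apply: cvgM; [exact: cvg_cst | exact: cvg_dotv].
Qed.

Lemma lyapunov_ge t : (1 + m * w) * (f (X t) - f xstar) <= lyapunov t.
Proof.
rewrite /lyapunov -addrA lerDl.
by rewrite addr_ge0 // mulr_ge0 ?invr_ge0 ?dotvv_ge0.
Qed.

Lemma lyapunov0_le : lyapunov 0 <=
  (1 + m * w) * ((3 + (2 - beta) ^+ 2) / (2 * w ^+ 2)) * dotv (x0 - xstar) (x0 - xstar).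
Proof.
rewrite /lyapunov /shifted_velocity X0 V0 [2 * w / _]mulrAC.
set g := gradf x0; set e := x0 - xstar; set a := 2 / (1 + m * w).
have W0_eq : - (a * w) *: g + (2 * m) *: e + (beta * w) *: g
    = ((beta - a) * w) *: g + (2 * m) *: e.
  by rewrite addrAC -scalerDl mulrBl [- _ + _]addrC.
have ge_ge0 : 0 <= dotv g e.
  by have := gradf_mono xstar x0; rewrite gradf_xstar subr0.
have coef_le0 : (beta - a) * w <= 0.
  rewrite pmulr_lle0 // subr_le0 (le_trans beta_le1) // /a ler_pdivlMr ?mul1r.
    by rewrite -[2]/(1 + 1) lerD2l.
  by rewrite ltr_pwDl // mulr_ge0 // ltW.
have W0_le : dotv (((beta - a) * w) *: g + (2 * m) *: e) (((beta - a) * w) *: g + (2 * m) *: e)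
    <= ((beta - a) * w) ^+ 2 * dotv g g + 4 * m ^+ 2 * dotv e e.
  rewrite dotvv_combination -mulrA exprMn.
  have := mulr_le0_ge0 coef_le0 (mulr_ge0 (ltW m_gt0) ge_ge0).
  lra.
have P_le : f x0 - f xstar <= dotv e e / (2 * w ^+ 2).
  have := descent_le f_grad L_gt0 gradf_lip xstar e.
  rewrite addrC subrK gradf_xstar dotv0l addr0 -lerBlDl => /le_trans; apply.
  rewrite ler_pdivlMr ?mulr_gt0 ?exprn_gt0 //.
  have -> : L / 2 * dotv e e * (2 * w ^+ 2) = L * w ^+ 2 * dotv e e by field.
  by rewrite ler_piMl ?dotvv_ge0.
have G_le : w ^+ 4 * dotv g g <= dotv e e.
  have := enorm_le_dotv (gradf_lip x0 xstar); rewrite gradf_xstar subr0 -/g -/e.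
  move=> /(ler_wpM2l (exprn_ge0 4 (ltW w_gt0))) /le_trans; apply.
  have -> : w ^+ 4 * (L ^+ 2 * dotv e e) = (L * w ^+ 2) ^+ 2 * dotv e e by ring.
  by rewrite ler_piMl ?dotvv_ge0 // expr_le1 // mulr_ge0 ?exprn_ge0 ?ltW.
apply: le_trans (_ : _ <= (1 + m * w) * (f x0 - f xstar) + 4^-1 * ((a * w) ^+ 2 * dotv g g)
    + 4^-1 * (((beta - a) * w) ^+ 2 * dotv g g + 4 * m ^+ 2 * dotv e e)) _.
  by rewrite dotvvZ sqrrN W0_eq lerD2l ler_pM2l ?invr_gt0.
apply: (initial_energy_bound m_gt0 w_gt0 mw_le1 _ (dotvv_ge0 g) P_le G_le).
by rewrite beta_ge0 beta_le1.
Qed.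

Lemma hr_convergence t : 0 <= t ->
  f (X t) - f xstar <=
    (3 + (2 - beta) ^+ 2) / (2 * w ^+ 2) * enorm (x0 - xstar) ^+ 2 * expR (- (m / 4) * t).
Proof.
move=> t_ge0; have c_gt0 : 0 < 1 + m * w by rewrite ltr_pwDl // mulr_ge0 // ltW.
rewrite -(ler_pM2l c_gt0) enorm_sqr; apply: le_trans (lyapunov_ge t) _.
have := le_expR_decay lyapunov_continuous lyapunov_is_derive (fun t _ => lyapunov_rate_le t) t_ge0.
move=> /le_trans; apply; rewrite !mulrA ler_pM2r ?expR_gt0 //.
by apply: le_trans lyapunov0_le _; rewrite !mulrA.
Qed.

End HighResolutionFlow.

Unset Implicit Arguments.

Theorem theorem4p1 (R : realType) (n : nat) (mu L : R)
    (f : 'rV[R]_n -> R) (gradf : 'rV[R]_n -> 'rV[R]_n) (hessf : 'rV[R]_n -> 'M[R]_n)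
    (xstar x0 : 'rV[R]_n) (beta s : R) (X V : R -> 'rV[R]_n) :
  0 < mu -> mu <= L ->
  S2 mu L f gradf hessf ->
  (forall y, f xstar <= f y) ->
  0 <= beta <= 1 ->
  0 < s -> s <= L^-1 ->
  HR_solution mu s beta gradf hessf x0 X V ->
  forall t : R, 0 <= t ->
    f (X t) - f xstar <=
      (3 + (2 - beta) ^+ 2) / (2 * s) * enorm (x0 - xstar) ^+ 2
        * expR (- (Num.sqrt mu / 4) * t).
Proof.
(* The Lipschitz continuity of the Hessian only matters for the existence of X. *)
move=> mu_gt0 muL [f_grad grad_hess f_strong gradf_lip _] xstar_min /andP[beta_ge0 beta_le1]
  s_gt0 sL [X0 V0 X_cont V_cont hr_ode] t t_ge0.
have L_gt0 : 0 < L := lt_le_trans mu_gt0 muL.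
have Ls_le1 : L * s <= 1 by rewrite -ler_pdivlMl // mulr1.
rewrite sqrtrM ?ltW // in V0 hr_ode.
rewrite -(sqr_sqrtr (ltW mu_gt0)) in muL f_strong.
rewrite -(sqr_sqrtr (ltW s_gt0)) in Ls_le1 *.
have m_gt0 : 0 < Num.sqrt mu by rewrite sqrtr_gt0.
have w_gt0 : 0 < Num.sqrt s by rewrite sqrtr_gt0.
exact (hr_convergence m_gt0 w_gt0 beta_ge0 beta_le1 muL Ls_le1 f_grad grad_hess f_strong
  gradf_lip xstar_min X0 V0 X_cont V_cont hr_ode t_ge0).
Qed.
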